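(* Let $G$ and $H$ be finite simple graphs with disjoint vertex sets, of orders $n_1$ and $n_2$ respectively, and let $u$ be a vertex of $G$. Then \[\mathrm{dp}_{G\vee H}(u)=x^{n_2}\,\mathrm{dp}_G(u)+x^{n_1}\,\mathrm{dp}(H).\]
   Context: For a vertex $v$ of a simple graph $\Gamma$, the degree polynomial $\mathrm{dp}_\Gamma(v)\in\mathbb{Z}[x]$ is the polynomial in which the coefficient of $x^{i}$ is the number of neighbors of $v$ in $\Gamma$ having degree $i$ in $\Gamma$ ($\mathrm{dp}_\Gamma(v)=0$ if $v$ is isolated). The degree polynomial of the graph $\Gamma$ is $\mathrm{dp}(\Gamma)=\sum_{i\ge 0} t_i x^i$, where $t_i$ is the number of vertices of $\Gamma$ of degree $i$ (so $t_0$ counts isolated vertices). The join $G\vee H$ is the simple graph on $V(G)\cup V(H)$ whose edges are the edges of $G$, the edges of $H$, and all pairs $\{a,b\}$ with $a\in V(G)$, $b\in V(H)$. *)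

From mathcomp Require Import all_boot all_order all_algebra.
Set Implicit Arguments. Unset Strict Implicit. Unset Printing Implicit Defensive.
Import GRing.Theory.
Local Open Scope ring_scope.

Definition simple_graph (T : finType) (e : rel T) : Prop :=
  symmetric e /\ irreflexive e.

Definition vdeg (T : finType) (e : rel T) (v : T) : nat := #|[set w | e v w]|.

Definition dpv (T : finType) (e : rel T) (v : T) : {poly int} :=
  \sum_(w | e v w) 'X^(vdeg e w).

Definition dpg (T : finType) (e : rel T) : {poly int} :=
  \sum_(v : T) 'X^(vdeg e v).

Definition gjoin (T1 T2 : finType) (eG : rel T1) (eH : rel T2) : rel (T1 + T2) :=
  fun a b => match a, b with
             | inl x, inl y => eG x y
             | inr x, inr y => eH x y
             | _, _ => true
             end.

From mathcomp Require Import all_boot all_order all_algebra.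
Import GRing.Theory.
Local Open Scope ring_scope.

(* In G \/ H a vertex of G gains all n2 vertices of H as new neighbours and a
   vertex of H gains all n1 vertices of G, so every degree is shifted by a
   constant on each side.  Splitting the neighbourhood of u into its part in G
   and the whole of H, the two shifts become the factors x^n2 and x^n1. *)

Lemma card_set_sumType (T1 T2 : finType) (P : pred (T1 + T2)) :
  #|[set b | P b]| = (#|[set x | P (inl x)]| + #|[set y | P (inr y)]|)%N.
Proof.
rewrite -!sum1_card big_sumType.
by congr (_ + _)%N; apply: eq_bigl => x; rewrite !inE.
Qed.

Section JoinDegrees.

Variables (T1 T2 : finType) (eG : rel T1) (eH : rel T2).

Lemma vdeg_gjoin_inl (w : T1) :
  vdeg (gjoin eG eH) (inl w) = (vdeg eG w + #|T2|)%N.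
Proof.
rewrite /vdeg card_set_sumType /=; congr (_ + _)%N.
by rewrite -cardsT; apply: eq_card => y; rewrite !inE.
Qed.

Lemma vdeg_gjoin_inr (w : T2) :
  vdeg (gjoin eG eH) (inr w) = (#|T1| + vdeg eH w)%N.
Proof.
rewrite /vdeg card_set_sumType /=; congr (_ + _)%N.
by rewrite -cardsT; apply: eq_card => y; rewrite !inE.
Qed.

End JoinDegrees.

Theorem theorem4p14 (T1 T2 : finType) (eG : rel T1) (eH : rel T2)
  (hG : simple_graph eG) (hH : simple_graph eH) (u : T1) :
  dpv (gjoin eG eH) (inl u) = 'X^#|T2| * dpv eG u + 'X^#|T1| * dpg eH.
Proof.
rewrite /dpv /dpg big_sumType /= !mulr_sumr; congr (_ + _).
  by apply: eq_bigr => w _; rewrite vdeg_gjoin_inl exprD mulrC.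
by apply: eq_bigr => w _; rewrite vdeg_gjoin_inr exprD.
Qed.
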